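(* For any rooted tree-structure $\varphi$, the $R$-linear map $\rho:\mathcal{T}(\varphi)\to\mathcal{T}(\varphi)\otimes\mathcal{T}(\varphi)$ defined on generators by $$\rho(T,s)=\sum_{e\in\operatorname{edg}(T)}(T^1_e,s|_{T^1_e})\otimes(T^2_e,s|_{T^2_e})$$ is a pre-Lie comultiplication.
   Context: $R$ is a commutative ring with unit. A pre-Lie comultiplication on an $R$-module $A$ is an $R$-linear $\rho:A\to A\otimes A$ with $(\mathrm{id}-P^{1,2})\big((\rho\otimes\mathrm{id})\rho-(\mathrm{id}\otimes\rho)\rho\big)=0$, where $P^{1,2}(x\otimes y\otimes z)=y\otimes x\otimes z$. Trees are finite; a rooted tree has a distinguished vertex, the root. A subtree $T'$ of a rooted tree $T$ (a tree formed by some vertices and edges of $T$) is rooted at the unique vertex $v$ of $T'$ such that every path from the root of $T$ to a point of $T'$ passes through $v$. An embedding of rooted trees $j:T'\to T$ is a homeomorphism of $T'$ onto a subtree of $T$ respecting vertices, edges and roots. $RTrees$ is the category of rooted trees and embeddings. A rooted tree-structure is a contravariant functor $\varphi$ from $RTrees$ to sets. A rooted $\varphi$-tree is a pair $(T,s)$ with $s\in\varphi(T)$; $(T,s)$ and $(\tilde T,\tilde s)$ are homeomorphic if there is a homeomorphism $j:T\to\tilde T$ with $\varphi(j)(\tilde s)=s$. For a subtree $T'\subset T$, $s|_{T'}=\varphi(\iota)(s)$ with $\iota$ the inclusion. $\mathcal{T}(\varphi)$ is the free $R$-module on homeomorphism classes of rooted $\varphi$-trees. For an edge $e$ of $T$,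 removing the interior of $e$ leaves two subtrees $T^1_e,T^2_e$, with $T^2_e$ containing the root of $T$ (rooted there) and $T^1_e$ rooted at its vertex adjacent to $e$; $\operatorname{edg}(T)$ is the edge set. *)

From mathcomp Require Import all_boot all_algebra.
From mathcomp Require Import boolp.
Set Implicit Arguments. Unset Strict Implicit. Unset Printing Implicit Defensive.
Import GRing.Theory.
Local Open Scope ring_scope.

Definition rtree_ax (vs : seq nat) (r : nat) (p : nat -> nat) : Prop :=
  [/\ uniq vs, r \in vs, p r = r, {in vs, forall v, p v \in vs}
    & {in vs, forall v, exists k, iter k p v = r}].

Record rtree := RTree {
  rt_vs : seq nat;
  rt_root : nat;
  rt_par : nat -> nat;
  rt_ax : rtree_ax rt_vs rt_root rt_par }.

(* the edge {v, par v}, v <> root, is indexed by v *)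
Definition rt_edges (T : rtree) : seq nat :=
  [seq v <- rt_vs T | v != rt_root T].

Definition edge (T : rtree) := {e : nat | e \in rt_edges T}.

Definition edges (T : rtree) : seq (edge T) := pmap insub (rt_edges T).

(* embeddings of rooted trees (morphisms of RTrees), as vertex maps:          *)
(* injective on vertices, mapping edges to edges and respecting roots         *)
(* (equivalently: commuting with the parent maps away from the root).        *)
Definition is_emb (T' T : rtree) (f : nat -> nat) : Prop :=
  [/\ {in rt_vs T', forall v, f v \in rt_vs T},
      {in rt_vs T' &, injective f}
    & {in rt_vs T', forall v, v != rt_root T' -> f (rt_par T' v) = rt_par T (f v)}].

(* Morphisms are vertex maps (identified when equal on vertices).            *)
Record rtree_structure := RTreeStructure {
  ts_obj :> rtree -> Type;
  ts_map : forall (T' T : rtree) (f : nat -> nat), is_emb T' T f -> ts_obj T -> ts_obj T';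
  ts_map_id : forall (T : rtree) (f : nat -> nat) (pf : is_emb T T f),
      {in rt_vs T, forall v, f v = v} -> forall s, ts_map pf s = s;
  ts_map_comp : forall (T'' T' T : rtree) (f g h : nat -> nat)
      (pf : is_emb T' T f) (pg : is_emb T'' T' g) (ph : is_emb T'' T h),
      {in rt_vs T'', forall v, h v = f (g v)} ->
      forall s, ts_map ph s = ts_map pg (ts_map pf s) }.

Definition phitree (phi : rtree_structure) := {T : rtree & phi T}.

Definition homeo (phi : rtree_structure) (x y : phitree phi) : Prop :=
  exists (f : nat -> nat) (pf : is_emb (projT1 x) (projT1 y) f),
    {in rt_vs (projT1 y), forall w, exists2 v, v \in rt_vs (projT1 x) & f v = w}
    /\ ts_map pf (projT2 y) = projT2 x.

Definition desc (T : rtree) (e v : nat) : Prop := exists k, iter k (rt_par T) v = e.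

Section Cut.
Variables (T : rtree) (e : edge T).
Let ee := val e.

Lemma edgeP : ee \in rt_vs T /\ ee != rt_root T.
Proof. by have := valP e; rewrite mem_filter => /andP[-> ->]. Qed.

Definition vs1 := [seq v <- rt_vs T | `[< desc T ee v >]].
Definition par1 (v : nat) := if v == ee then ee else rt_par T v.
Definition vs2 := [seq v <- rt_vs T | ~~ `[< desc T ee v >]].

Lemma iter_root k : iter k (rt_par T) (rt_root T) = rt_root T.
Proof.
case: (rt_ax T) => _ _ pr _ _.
by elim: k => //= k ->; rewrite pr.
Qed.

Lemma sub1_ax : rtree_ax vs1 ee par1.
Proof.
case: (rt_ax T) => u rin pr cl re; case: edgeP => ein ner.
split.
- exact: filter_uniq.
- by rewrite mem_filter ein andbT; apply/asboolP; exists 0%N.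
- by rewrite /par1 eqxx.
- move=> v; rewrite mem_filter => /andP[/asboolP [k hk] vin].
  rewrite /par1; case: eqP => [_|/eqP nve].
    by rewrite mem_filter ein andbT; apply/asboolP; exists 0%N.
  rewrite mem_filter cl // andbT; apply/asboolP.
  case: k hk => [/= hv|k hk]; first by rewrite hv eqxx in nve.
  by exists k; rewrite -iterSr.
- move=> v; rewrite mem_filter => /andP[/asboolP [k hk] _].
  elim: k v hk => [|k IH] v hk; first by exists 0%N.
  rewrite iterSr in hk; case: (IH _ hk) => k' hk'.
  case: (eqVneq v ee) => [->|nve]; first by exists 0%N.
  by exists k'.+1; rewrite iterSr /par1 (negbTE nve).
Qed.

Definition sub1 : rtree := RTree sub1_ax.

Lemma sub2_ax : rtree_ax vs2 (rt_root T) (rt_par T).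
Proof.
case: (rt_ax T) => u rin pr cl re; case: edgeP => ein ner.
split.
- exact: filter_uniq.
- rewrite mem_filter rin andbT; apply/asboolP => -[k hk].
  by rewrite iter_root in hk; rewrite hk eqxx in ner.
- exact: pr.
- move=> v; rewrite mem_filter => /andP[nd vin].
  rewrite mem_filter cl // andbT; apply: contra nd => /asboolP [k hk].
  by apply/asboolP; exists k.+1; rewrite iterSr.
- by move=> v; rewrite mem_filter => /andP[_ /re].
Qed.

Definition sub2 : rtree := RTree sub2_ax.

Lemma incl1 : is_emb sub1 T id.
Proof.
split.
- by move=> v; rewrite /= mem_filter => /andP[].
- by move=> v w _ _.
- by move=> v _ /= nve; rewrite /par1 (negbTE nve).
Qed.

Lemma incl2 : is_emb sub2 T id.
Proof.
split.
- by move=> v; rewrite /= mem_filter => /andP[].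
- by move=> v w _ _.
- by [].
Qed.

End Cut.

Definition cut1 (phi : rtree_structure) (x : phitree phi) (e : edge (projT1 x))
  : phitree phi := existT _ (sub1 e) (ts_map (incl1 e) (projT2 x)).
Definition cut2 (phi : rtree_structure) (x : phitree phi) (e : edge (projT1 x))
  : phitree phi := existT _ (sub2 e) (ts_map (incl2 e) (projT2 x)).

(* Free R-modules on the classes of a relation [eqv] on a type Y.            *)
(* An element is represented by a formal finite combination                  *)
(* l = [:: (r_1, y_1); ...] (meaning sum_i r_i [y_i]); its coefficient on the *)
(* class of y is coef eqv l y.  Two combinations are equal in the module iff  *)
(* all their coefficients agree.  The tensor powers of the free module on the *)
(* classes of X are the free modules on classes of X*X and X*X*X, for the     *)
(* componentwise relation.                                                    *)
Definition coef (R : comPzRingType) (Y : Type) (eqv : Y -> Y -> Prop)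
    (l : seq (R * Y)) (y : Y) : R :=
  \sum_(p <- l | `[< eqv p.2 y >]) p.1.

Definition eqv2 (X : Type) (eqv : X -> X -> Prop) (a b : X * X) : Prop :=
  eqv a.1 b.1 /\ eqv a.2 b.2.
Definition eqv3 (X : Type) (eqv : X -> X -> Prop) (a b : X * X * X) : Prop :=
  [/\ eqv a.1.1 b.1.1, eqv a.1.2 b.1.2 & eqv a.2 b.2].

Section Comult.
Variables (R : comPzRingType) (X : Type) (eqv : X -> X -> Prop).
Variable g : X -> seq (R * (X * X)).

Definition lin_ext (l : seq (R * X)) : seq (R * (X * X)) :=
  flatten [seq [seq (p.1 * q.1, q.2) | q <- g p.2] | p <- l].
Definition ext_l (l : seq (R * (X * X))) : seq (R * (X * X * X)) :=
  flatten [seq [seq (p.1 * q.1, (q.2.1, q.2.2, p.2.2)) | q <- g p.2.1] | p <- l].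
Definition ext_r (l : seq (R * (X * X))) : seq (R * (X * X * X)) :=
  flatten [seq [seq (p.1 * q.1, (p.2.1, q.2.1, q.2.2)) | q <- g p.2.2] | p <- l].
Definition fsub (Z : Type) (a b : seq (R * Z)) : seq (R * Z) :=
  a ++ [seq (- p.1, p.2) | p <- b].
Definition flip12 (l : seq (R * (X * X * X))) : seq (R * (X * X * X)) :=
  [seq (p.1, (p.2.1.2, p.2.1.1, p.2.2)) | p <- l].

Definition preLie_defect (l : seq (R * X)) : seq (R * (X * X * X)) :=
  let t := fsub (ext_l (lin_ext l)) (ext_r (lin_ext l)) in fsub t (flip12 t).

Definition well_defined_comult : Prop :=
  forall l l' : seq (R * X), (forall x, coef eqv l x = coef eqv l' x) ->
    forall y, coef (eqv2 eqv) (lin_ext l) y = coef (eqv2 eqv) (lin_ext l') y.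

Definition preLie_comult : Prop :=
  forall (l : seq (R * X)) (y : X * X * X),
    coef (eqv3 eqv) (preLie_defect l) y = 0.
End Comult.

Definition rho_gen (R : comPzRingType) (phi : rtree_structure) (x : phitree phi)
  : seq (R * (phitree phi * phitree phi)) :=
  [seq (1, (cut1 e, cut2 e)) | e <- edges (projT1 x)].

From mathcomp Require Import all_boot all_algebra.
From mathcomp Require Import boolp.
Set Implicit Arguments. Unset Strict Implicit. Unset Printing Implicit Defensive.
Import GRing.Theory.

(* Cutting at an edge commutes with homeomorphisms of phi-trees, so rho is well defined
   on homeomorphism classes.  In (rho (x) id) rho one cuts an edge u and then an edge v
   strictly below u; in (id (x) rho) rho one cuts an edge a and then an edge b of the part
   containing the root.  When b lies above a, this yields the same three phi-subtrees as
   cutting b and then a in the first expression, so these terms cancel.  What remains is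
   minus the sum, over pairs of incomparable edges a, b, of (T^1_a, T^1_b, rest); it is
   symmetric in the first two factors, hence killed by id - P^{1,2}. *)

Local Notation tree x := (projT1 x).

Definition flip3 (X : Type) (w : X * X * X) : X * X * X := (w.1.2, w.1.1, w.2).

Section Combinations.
Variable R : comPzRingType.
Local Open Scope ring_scope.

Definition wsum (Y : Type) (l : seq (R * Y)) (F : Y -> R) : R :=
  \sum_(p <- l) p.1 * F p.2.

Definition ind (P : Prop) : R := if `[< P >] then 1 else 0.

Lemma coefE (Y : Type) (E : Y -> Y -> Prop) (l : seq (R * Y)) (y : Y) :
  coef E l y = wsum l (fun z => ind (E z y)).
Proof.
rewrite /coef /wsum big_mkcond; apply: eq_bigr => p _ /=.
by rewrite /ind; case: ifP; rewrite ?mulr1 ?mulr0.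
Qed.

Lemma wsum_flatten (Z W V : Type) (l : seq (R * Z)) (G : Z -> seq (R * W))
    (h : Z -> W -> V) (F : V -> R) :
  wsum (flatten [seq [seq (p.1 * q.1, h p.2 q.2) | q <- G p.2] | p <- l]) F =
  wsum l (fun z => wsum (G z) (fun w => F (h z w))).
Proof.
rewrite /wsum big_flatten big_map; apply: eq_bigr => p _.
by rewrite big_map mulr_sumr; apply: eq_bigr => q _; rewrite mulrA.
Qed.

Lemma wsum_cat (Y : Type) (l l' : seq (R * Y)) (F : Y -> R) :
  wsum (l ++ l') F = wsum l F + wsum l' F.
Proof. exact: big_cat. Qed.

Lemma coef_fsub (Y : Type) (E : Y -> Y -> Prop) (a b : seq (R * Y)) (y : Y) :
  coef E (fsub a b) y = coef E a y - coef E b y.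
Proof.
rewrite !coefE wsum_cat /wsum big_map -sumrN.
by congr (_ + _); apply: eq_bigr => p _; rewrite mulNr.
Qed.

Lemma coef_flip12 (X : Type) (E : X -> X -> Prop) (l : seq (R * (X * X * X))) (y : X * X * X) :
  coef (eqv3 E) (flip12 l) y = coef (eqv3 E) l (flip3 y).
Proof.
rewrite /coef big_map; apply: eq_bigl => p /=.
by apply: asbool_equiv_eq; split=> -[].
Qed.

Section Extensions.
Variables (X : Type) (g : X -> seq (R * (X * X))).

Lemma wsum_lin_ext (l : seq (R * X)) (F : X * X -> R) :
  wsum (lin_ext g l) F = wsum l (fun x => wsum (g x) F).
Proof. exact: (wsum_flatten l g (fun _ w => w)). Qed.

Lemma wsum_ext_l (l : seq (R * (X * X))) (F : X * X * X -> R) :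
  wsum (ext_l g l) F = wsum l (fun z => wsum (g z.1) (fun q => F (q.1, q.2, z.2))).
Proof. exact: (wsum_flatten l (fun z => g z.1) (fun z q => (q.1, q.2, z.2))). Qed.

Lemma wsum_ext_r (l : seq (R * (X * X))) (F : X * X * X -> R) :
  wsum (ext_r g l) F = wsum l (fun z => wsum (g z.2) (fun q => F (z.1, q.1, q.2))).
Proof. exact: (wsum_flatten l (fun z => g z.2) (fun z q => (z.1, q.1, q.2))). Qed.

End Extensions.

Section Classes.
Variables (Y : Type) (E : Y -> Y -> Prop).
Hypotheses (E_refl : forall a, E a a) (E_sym : forall a b, E a b -> E b a)
  (E_trans : forall a b c, E a b -> E b c -> E a c).
Variable F : Y -> R.
Hypothesis F_inv : forall a b, E a b -> F a = F b.

Let drop_class (y0 : Y) (l : seq (R * Y)) := [seq p <- l | ~~ `[< E p.2 y0 >]].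

Lemma coef_drop_class (l : seq (R * Y)) (y0 y : Y) :
  coef E (drop_class y0 l) y = if `[< E y y0 >] then 0 else coef E l y.
Proof.
rewrite /coef big_filter_cond; case: ifP => /asboolP hy.
  apply: big1 => p /andP[/asboolP nE /asboolP pE].
  by case: nE; apply: E_trans pE hy.
apply: eq_bigl => p; apply/andP/idP => [[]//|/asboolP pE]; split; last exact/asboolP.
by apply/asboolP => pE0; apply: hy; apply: E_trans (E_sym pE) pE0.
Qed.

Lemma wsum_drop_class (l : seq (R * Y)) (y0 : Y) :
  wsum l F = coef E l y0 * F y0 + wsum (drop_class y0 l) F.
Proof.
rewrite /wsum (bigID (fun p => `[< E p.2 y0 >])) /= big_filter /coef mulr_suml.
by congr (_ + _); apply: eq_bigr => p /asboolP pE; rewrite (F_inv pE).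
Qed.

Lemma eq_wsum_coef (l l' : seq (R * Y)) :
  (forall y, coef E l y = coef E l' y) -> wsum l F = wsum l' F.
Proof.
(* Remove the class of the first entry of [l ++ l'] from both sides and recurse. *)
move: {2}(size (l ++ l')) (leqnn (size (l ++ l'))) => n.
elim: n l l' => [|n IH] l l' hs hc.
  by move: hs; rewrite leqn0 size_cat addn_eq0 => /andP[/nilP-> /nilP->].
case e: (l ++ l') hs => [|p s] hs.
  by move/eqP: (congr1 size e); rewrite size_cat addn_eq0 => /andP[/nilP-> /nilP->].
rewrite (wsum_drop_class l p.2) (wsum_drop_class l' p.2) hc.
congr (_ + _); apply: IH => [|y]; last by rewrite !coef_drop_class hc.
rewrite /drop_class -filter_cat e size_filter /= asboolT // add0n.
by rewrite -ltnS (leq_trans _ hs) // ltnS count_size.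
Qed.

End Classes.

Section Componentwise.
Variables (X : Type) (E : X -> X -> Prop).
Hypotheses (E_sym : forall a b, E a b -> E b a)
  (E_trans : forall a b c, E a b -> E b c -> E a c).

Lemma ind_eqv2 (a b a' b' : X) (y : X * X) : E a a' -> E b b' ->
  ind (eqv2 E (a, b) y) = ind (eqv2 E (a', b') y).
Proof.
have move_eqv2 u v u' v' : E u u' -> E v v' -> eqv2 E (u, v) y -> eqv2 E (u', v') y.
  move=> uu' vv' [uy vy].
  by split; [apply: E_trans (E_sym uu') uy | apply: E_trans (E_sym vv') vy].
move=> aa' bb'; rewrite /ind (asbool_equiv_eq (Q := eqv2 E (a', b') y)) //.
by split; apply: move_eqv2 => //; apply: E_sym.
Qed.

Lemma ind_eqv3 (a b c a' b' c' : X) (y : X * X * X) : E a a' -> E b b' -> E c c' ->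
  ind (eqv3 E (a, b, c) y) = ind (eqv3 E (a', b', c') y).
Proof.
have move_eqv3 u v w u' v' w' :
    E u u' -> E v v' -> E w w' -> eqv3 E (u, v, w) y -> eqv3 E (u', v', w') y.
  move=> uu' vv' ww' [uy vy wy].
  by split; [apply: E_trans (E_sym uu') uy | apply: E_trans (E_sym vv') vy
            | apply: E_trans (E_sym ww') wy].
move=> aa' bb' cc'; rewrite /ind (asbool_equiv_eq (Q := eqv3 E (a', b', c') y)) //.
by split; apply: move_eqv3 => //; apply: E_sym.
Qed.

Lemma ind_eqv3_flip3 (z w : X * X * X) :
  ind (eqv3 E z (flip3 w)) = ind (eqv3 E (flip3 z) w).
Proof. by rewrite /ind (asbool_equiv_eq (Q := eqv3 E (flip3 z) w)) //; split=> -[]. Qed.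

End Componentwise.

Section Criteria.
Variables (X : Type) (E : X -> X -> Prop) (g : X -> seq (R * (X * X))).

Lemma coef_lin_ext (l : seq (R * X)) (y : X * X) :
  coef (eqv2 E) (lin_ext g l) y = wsum l (fun x => coef (eqv2 E) (g x) y).
Proof. by rewrite coefE wsum_lin_ext; apply: eq_bigr => p _; rewrite coefE. Qed.

Lemma well_defined_comult_inv :
    (forall a, E a a) -> (forall a b, E a b -> E b a) ->
    (forall a b c, E a b -> E b c -> E a c) ->
    (forall x x' y, E x x' -> coef (eqv2 E) (g x) y = coef (eqv2 E) (g x') y) ->
  well_defined_comult E g.
Proof.
move=> E_refl E_sym E_trans g_inv l l' hc y; rewrite !coef_lin_ext.
exact: (eq_wsum_coef E_refl E_sym E_trans (fun x x' => g_inv x x' y)).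
Qed.

Lemma coef_ext_l_lin_ext (l : seq (R * X)) (w : X * X * X) :
  coef (eqv3 E) (ext_l g (lin_ext g l)) w =
  wsum l (fun x => coef (eqv3 E) (ext_l g (g x)) w).
Proof.
rewrite coefE wsum_ext_l wsum_lin_ext.
by apply: eq_bigr => p _; rewrite coefE wsum_ext_l.
Qed.

Lemma coef_ext_r_lin_ext (l : seq (R * X)) (w : X * X * X) :
  coef (eqv3 E) (ext_r g (lin_ext g l)) w =
  wsum l (fun x => coef (eqv3 E) (ext_r g (g x)) w).
Proof.
rewrite coefE wsum_ext_r wsum_lin_ext.
by apply: eq_bigr => p _; rewrite coefE wsum_ext_r.
Qed.

Definition assoc_defect (x : X) : seq (R * (X * X * X)) :=
  fsub (ext_l g (g x)) (ext_r g (g x)).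

Lemma preLie_comult_flip3 :
    (forall x w, coef (eqv3 E) (assoc_defect x) (flip3 w) =
                 coef (eqv3 E) (assoc_defect x) w) ->
  preLie_comult E g.
Proof.
move=> flip_inv l w; rewrite /preLie_defect coef_fsub coef_flip12 !coef_fsub.
rewrite !coef_ext_l_lin_ext !coef_ext_r_lin_ext /wsum -!sumrB.
apply: big1 => p _; rewrite -!mulrBr.
by have := flip_inv p.2 w; rewrite !coef_fsub => ->; rewrite subrr mulr0.
Qed.

End Criteria.
End Combinations.

Lemma eq_iter_orbit (A : Type) (f g : A -> A) (k : nat) (t : A) :
  (forall j, j < k -> f (iter j g t) = g (iter j g t)) -> iter k f t = iter k g t.
Proof. by elim: k => //= k IH fg; rewrite IH ?fg // => j /ltnW; apply: fg. Qed.

Section TreeOrder.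
Variable T : rtree.
Local Notation vs := (rt_vs T).
Local Notation r := (rt_root T).
Local Notation p := (rt_par T).

Lemma rt_root_mem : r \in vs.
Proof. by case: (rt_ax T). Qed.

Lemma rt_par_root : p r = r.
Proof. by case: (rt_ax T). Qed.

Lemma rt_par_mem v : v \in vs -> p v \in vs.
Proof. by case: (rt_ax T) => _ _ _ par_mem _; apply: par_mem. Qed.

Lemma iter_par_mem k v : v \in vs -> iter k p v \in vs.
Proof. by move=> vin; elim: k => //= k IH; apply: rt_par_mem. Qed.

Lemma mem_rt_edges v : (v \in rt_edges T) = (v != r) && (v \in vs).
Proof. by rewrite mem_filter. Qed.

Lemma rt_edge_mem v : v \in rt_edges T -> v \in vs.
Proof. by rewrite mem_rt_edges => /andP[]. Qed.

Lemma rt_reach v : v \in vs -> desc T r v.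
Proof. by case: (rt_ax T) => _ _ _ _ reach; apply: reach. Qed.

(* The root is absorbing and reachable from [v]. *)
Lemma iter_par_fixed_root n v : v \in vs -> 0 < n -> iter n p v = v -> v = r.
Proof.
move=> vin n_gt0 fixv; have [k hk] := rt_reach vin.
have iter_mul m : iter (m * n) p v = v by elim: m => //= m IH; rewrite mulSn iterD IH fixv.
rewrite -(iter_mul k) -(subnK (leq_pmulr k n_gt0)) iterD hk.
exact: iter_root.
Qed.

Lemma desc_refl v : desc T v v.
Proof. by exists 0. Qed.

Lemma desc_trans a b c : desc T a b -> desc T b c -> desc T a c.
Proof. by move=> [k hk] [m hm]; exists (k + m); rewrite iterD hm hk. Qed.

Lemma desc_anti a b : b \in vs -> desc T a b -> desc T b a -> a = b.
Proof.
move=> bin [k hk] [m hm]; have [/eqP|km_gt0] := posnP (m + k).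
  by rewrite addn_eq0 => /andP[_ /eqP k0]; rewrite -hk k0.
have br : b = r by apply: (iter_par_fixed_root bin km_gt0); rewrite iterD hk hm.
by rewrite -hk br iter_root.
Qed.

Lemma desc_root v : desc T v r -> v = r.
Proof. by move=> [k <-]; rewrite iter_root. Qed.

Lemma desc_total a b v : desc T a v -> desc T b v -> desc T a b \/ desc T b a.
Proof.
move=> [k hk] [m hm]; case: (leqP k m) => km.
  by right; exists (m - k); rewrite -hk -iterD subnK.
by left; exists (k - m); rewrite -hm -iterD subnK // ltnW.
Qed.

End TreeOrder.

Lemma is_emb_id (T : rtree) : is_emb T T id.
Proof. by split. Qed.

Section Embedding.
Variables (T T' : rtree) (f : nat -> nat).
Hypothesis f_emb : is_emb T T' f.

Lemma emb_mem v : v \in rt_vs T -> f v \in rt_vs T'.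
Proof. by case: f_emb => f_mem _ _; apply: f_mem. Qed.

Lemma emb_inj : {in rt_vs T &, injective f}.
Proof. by case: f_emb. Qed.

Lemma emb_nonroot v : v \in rt_vs T -> v != rt_root T -> f v != rt_root T'.
Proof.
case: f_emb => _ f_inj f_par vin vr; apply/eqP => fv.
have par_v : rt_par T v = v.
  by apply: f_inj; rewrite ?rt_par_mem // f_par // fv rt_par_root.
by move/eqP: vr; apply; apply: (@iter_par_fixed_root T 1).
Qed.

Lemma is_emb_comp (T'' : rtree) (h : nat -> nat) :
  is_emb T' T'' h -> is_emb T T'' (h \o f).
Proof.
move=> h_emb; have [h_mem h_inj h_par] := h_emb; have [f_mem f_inj f_par] := f_emb.
split=> [v vin | u v uin vin /h_inj huv | v vin vr] /=.
- exact/h_mem/f_mem.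
- by apply: f_inj => //; apply: huv; apply: f_mem.
- by rewrite f_par // h_par ?f_mem ?emb_nonroot.
Qed.

Section Onto.
Hypothesis f_onto : {in rt_vs T', forall w, exists2 v, v \in rt_vs T & f v = w}.

Lemma emb_onto_root : f (rt_root T) = rt_root T'.
Proof.
have [u uin fu] := f_onto (rt_root_mem T').
have [ur0 | ur] := eqVneq u (rt_root T); first by rewrite -ur0.
by move: (emb_nonroot uin ur); rewrite fu eqxx.
Qed.

Lemma emb_onto_par v : v \in rt_vs T -> f (rt_par T v) = rt_par T' (f v).
Proof.
move=> vin; have [->|vr] := eqVneq v (rt_root T).
  by rewrite rt_par_root emb_onto_root rt_par_root.
by case: f_emb => _ _ f_par; apply: f_par.
Qed.

Lemma emb_onto_iter k v : v \in rt_vs T -> f (iter k (rt_par T) v) = iter k (rt_par T') (f v).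
Proof. by move=> vin; elim: k => //= k <-; rewrite emb_onto_par ?iter_par_mem. Qed.

Lemma emb_onto_desc a v : a \in rt_vs T -> v \in rt_vs T ->
  desc T a v <-> desc T' (f a) (f v).
Proof.
move=> ain vin; split=> -[k hk]; exists k; first by rewrite -emb_onto_iter // hk.
by apply: emb_inj; rewrite ?iter_par_mem ?emb_onto_iter.
Qed.

End Onto.
End Embedding.

Section Homeomorphism.
Variable phi : rtree_structure.
Implicit Types x y z : phitree phi.

Lemma ts_map_ext (T T' : rtree) (f f' : nat -> nat) (pf : is_emb T T' f)
    (pf' : is_emb T T' f') :
  {in rt_vs T, f =1 f'} -> forall s : phi T', ts_map pf s = ts_map pf' s.
Proof. by move=> ff' s; rewrite (ts_map_comp pf' (is_emb_id T) pf) ?ts_map_id. Qed.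

Lemma homeo_refl x : homeo x x.
Proof.
exists id, (is_emb_id _); split; last by rewrite ts_map_id.
by move=> w win; exists w.
Qed.

Lemma homeo_trans x y z : homeo x y -> homeo y z -> homeo x z.
Proof.
move=> [f [pf [f_onto hf]]] [g [pg [g_onto hg]]].
exists (g \o f), (is_emb_comp pf pg); split; last by rewrite (ts_map_comp pg pf) // hg hf.
by move=> w /g_onto [v' /f_onto [v vin <-] <-]; exists v.
Qed.

Lemma homeo_sym x y : homeo x y -> homeo y x.
Proof.
move=> [f [pf [f_onto hf]]].
pose g w := nth 0 (rt_vs (tree x)) (index w (map f (rt_vs (tree x)))).
have gK w : w \in rt_vs (tree y) -> g w \in rt_vs (tree x) /\ f (g w) = w.
  move=> /f_onto [v vin <-].
  have fvx : f v \in map f (rt_vs (tree x)) by apply: map_f.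
  have ilt : index (f v) (map f (rt_vs (tree x))) < size (rt_vs (tree x)).
    by rewrite -(size_map f) index_mem.
  by rewrite /g mem_nth // -(nth_map 0 0) // nth_index.
have pg : is_emb (tree y) (tree x) g.
  split=> [w /gK[] // | w1 w2 /gK[_ h1] /gK[_ h2] e | w win wr].
    by rewrite -h1 -h2 e.
  have [[gw fgw] [gpw fgpw]] := (gK w win, gK _ (rt_par_mem win)).
  apply: (emb_inj pf) => //; first exact: rt_par_mem.
  by rewrite fgpw (emb_onto_par pf f_onto gw) fgw.
exists g, pg; split=> [v vin | ].
  exists (f v); first exact: (emb_mem pf).
  by have [gfv /(emb_inj pf gfv vin)] := gK _ (emb_mem pf vin).
rewrite -hf -(ts_map_comp pf pg (is_emb_id (tree y))) ?ts_map_id //.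
by move=> w /gK[].
Qed.

Definition is_restriction z x :=
  exists pf : is_emb (tree z) (tree x) id, projT2 z = ts_map pf (projT2 x).

Lemma is_restriction_refl x : is_restriction x x.
Proof. by exists (is_emb_id _); rewrite ts_map_id. Qed.

Lemma is_restriction_trans x y z :
  is_restriction z y -> is_restriction y x -> is_restriction z x.
Proof.
move=> [pzy hz] [pyx hy]; exists (is_emb_comp pzy pyx).
by rewrite hz hy (ts_map_comp pyx pzy).
Qed.

Lemma homeo_restriction x x' z z' (f : nat -> nat) (pf : is_emb (tree x) (tree x') f) :
    ts_map pf (projT2 x') = projT2 x -> is_restriction z x -> is_restriction z' x' ->
  forall pz : is_emb (tree z) (tree z') f,
    {in rt_vs (tree z'), forall w, exists2 v, v \in rt_vs (tree z) & f v = w} ->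
  homeo z z'.
Proof.
move=> hf [pzx hz] [pzx' hz'] pz z_onto; exists f, pz; split=> //.
rewrite hz hz' -hf -(ts_map_comp pzx' pz (is_emb_comp pz pzx')) //.
rewrite -(ts_map_comp pf pzx (is_emb_comp pzx pf)) //.
exact: ts_map_ext.
Qed.

Lemma homeo_restriction_same x z z' :
    is_restriction z x -> is_restriction z' x -> rt_vs (tree z) =i rt_vs (tree z') ->
    rt_root (tree z) = rt_root (tree z') ->
    {in rt_vs (tree z), forall t, t != rt_root (tree z) ->
       rt_par (tree z) t = rt_par (tree z') t} ->
  homeo z z'.
Proof.
move=> zx z'x same_vs same_root same_par.
have pz : is_emb (tree z) (tree z') id.
  by split=> [t | // | t tin tr]; rewrite ?same_vs //= same_par.
apply: (homeo_restriction (ts_map_id (is_emb_id _) _ _) zx z'x pz) => //.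
by move=> w win; exists w; rewrite ?same_vs.
Qed.

End Homeomorphism.

Section Cuts.
Variable phi : rtree_structure.
Implicit Types x : phitree phi.

(* Cut at the edge indexed by [v]; the junk value for a [v] indexing no edge is [x]. *)
Definition cut1_at x (v : nat) : phitree phi :=
  if (insub v : option (edge (tree x))) is Some e then cut1 e else x.
Definition cut2_at x (v : nat) : phitree phi :=
  if (insub v : option (edge (tree x))) is Some e then cut2 e else x.

Lemma is_restriction_cut1_at x v : is_restriction (cut1_at x v) x.
Proof.
rewrite /cut1_at; case: insubP => [e _ _ | _]; last exact: is_restriction_refl.
by exists (incl1 e).
Qed.

Lemma is_restriction_cut2_at x v : is_restriction (cut2_at x v) x.
Proof.
rewrite /cut2_at; case: insubP => [e _ _ | _]; last exact: is_restriction_refl.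
by exists (incl2 e).
Qed.

Section AtEdge.
Variables (x : phitree phi) (v : nat).
Hypothesis v_edge : v \in rt_edges (tree x).
Local Notation T := (tree x).

Let cut_atE (A : Type) (F : edge T -> A) (a : A) :
  (if (insub v : option (edge T)) is Some e then F e else a) = F (Sub v v_edge).
Proof. by rewrite insubT. Qed.

Lemma cut1_at_vs : rt_vs (tree (cut1_at x v)) = [seq w <- rt_vs T | `[< desc T v w >]].
Proof. by rewrite /cut1_at cut_atE. Qed.
Lemma cut1_at_root : rt_root (tree (cut1_at x v)) = v.
Proof. by rewrite /cut1_at cut_atE. Qed.
Lemma cut1_at_par : rt_par (tree (cut1_at x v)) = fun w => if w == v then v else rt_par T w.
Proof. by rewrite /cut1_at cut_atE. Qed.
Lemma cut2_at_vs : rt_vs (tree (cut2_at x v)) = [seq w <- rt_vs T | ~~ `[< desc T v w >]].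
Proof. by rewrite /cut2_at cut_atE. Qed.
Lemma cut2_at_root : rt_root (tree (cut2_at x v)) = rt_root T.
Proof. by rewrite /cut2_at cut_atE. Qed.
Lemma cut2_at_par : rt_par (tree (cut2_at x v)) = rt_par T.
Proof. by rewrite /cut2_at cut_atE. Qed.

Lemma cut1_at_edge c : c \in rt_vs T -> desc T v c -> c != v ->
  c \in rt_edges (tree (cut1_at x v)).
Proof.
move=> cin vc cv; rewrite mem_rt_edges cut1_at_vs cut1_at_root mem_filter cv cin andbT.
exact/asboolP.
Qed.

Lemma cut2_at_edge c : c \in rt_edges T -> ~ desc T v c ->
  c \in rt_edges (tree (cut2_at x v)).
Proof.
rewrite !mem_rt_edges => /andP[cr cin] vc.
by rewrite cut2_at_vs cut2_at_root mem_filter cr cin andbT; apply/asboolP.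
Qed.

Lemma desc_cut2_at a t : desc (tree (cut2_at x v)) a t = desc T a t.
Proof. by rewrite /desc cut2_at_par. Qed.

(* Below a proper descendant [a] of [v], the parent maps of [T] and of [T^1_v]
   agree along every path that reaches [a]. *)
Lemma desc_cut1_at a t : desc T v a -> a != v ->
  desc (tree (cut1_at x v)) a t <-> desc T a t.
Proof.
move=> va av; have vin := rt_edge_mem v_edge; rewrite /desc cut1_at_par.
set par1 := fun w => if w == v then v else rt_par T w.
have par1E w : w != v -> par1 w = rt_par T w by rewrite /par1 => /negbTE ->.
split=> -[k hk]; exists k.
  rewrite -hk; apply: eq_iter_orbit => j jk; apply/esym/par1E; apply: contra av => /eqP vj.
  by rewrite -hk -(subnK (ltnW jk)) iterD vj iter_fix // /par1 eqxx.
rewrite -hk; apply: eq_iter_orbit => j jk; apply: par1E; apply/eqP => jv.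
have av' : desc T a v by exists (k - j); rewrite -jv -iterD subnK // ltnW.
by move/eqP: av; apply; apply: desc_anti vin av' va.
Qed.

End AtEdge.

Lemma wsum_rho_gen (R : comPzRingType) x (F : phitree phi * phitree phi -> R) :
  wsum (rho_gen R x) F = (\sum_(v <- rt_edges (tree x)) F (cut1_at x v, cut2_at x v))%R.
Proof.
rewrite /wsum /rho_gen /edges big_map big_pmap; apply: eq_big_seq => v v_edge.
by rewrite /cut1_at /cut2_at insubT /= mul1r.
Qed.

End Cuts.

Section CutsUnderHomeomorphism.
Variable phi : rtree_structure.
Variables (x x' : phitree phi) (f : nat -> nat) (pf : is_emb (tree x) (tree x') f).
Hypotheses
  (f_onto : {in rt_vs (tree x'), forall w, exists2 v, v \in rt_vs (tree x) & f v = w})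
  (hf : ts_map pf (projT2 x') = projT2 x).

Lemma emb_edge v : v \in rt_edges (tree x) -> f v \in rt_edges (tree x').
Proof. by rewrite !mem_rt_edges => /andP[vr vin]; rewrite (emb_nonroot pf) ?(emb_mem pf). Qed.

Lemma perm_rt_edges_emb_onto : perm_eq (rt_edges (tree x')) (map f (rt_edges (tree x))).
Proof.
have uniq_edges T : uniq (rt_edges T) by apply: filter_uniq; case: (rt_ax T).
apply: uniq_perm => [|| w]; first exact: uniq_edges.
- rewrite map_inj_in_uniq ?uniq_edges // => a b.
  by rewrite !mem_rt_edges => /andP[_ ain] /andP[_ bin]; apply: (emb_inj pf).
- apply/idP/mapP => [|[v /emb_edge fv_edge ->] //].
  rewrite mem_rt_edges => /andP[wr /f_onto [v vin fvw]]; exists v => //.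
  rewrite mem_rt_edges vin andbT; apply: contra wr => /eqP vr.
  by rewrite -fvw vr (emb_onto_root pf f_onto).
Qed.

Section AtEdge.
Variable v : nat.
Hypothesis v_edge : v \in rt_edges (tree x).
Let fv_edge := emb_edge v_edge.
Let vin := rt_edge_mem v_edge.

Lemma homeo_cut1_at : homeo (cut1_at x v) (cut1_at x' (f v)).
Proof.
apply: (homeo_restriction hf (is_restriction_cut1_at x v) (is_restriction_cut1_at x' (f v))).
  split=> [t | a b | t].
  - rewrite (cut1_at_vs v_edge) (cut1_at_vs fv_edge) !mem_filter => /andP[/asboolP vt tin].
    by rewrite (emb_mem pf) // andbT; apply/asboolP/(emb_onto_desc pf f_onto vin tin).
  - rewrite (cut1_at_vs v_edge) !mem_filter => /andP[_ ain] /andP[_ bin].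
    exact: (emb_inj pf).
  - rewrite (cut1_at_vs v_edge) mem_filter (cut1_at_root v_edge) => /andP[_ tin] tv.
    rewrite (cut1_at_par v_edge) (cut1_at_par fv_edge) /= (inj_in_eq (emb_inj pf)) //.
    by rewrite (negbTE tv) (emb_onto_par pf f_onto).
move=> w; rewrite (cut1_at_vs fv_edge) mem_filter => /andP[/asboolP vw /f_onto [t tin ftw]].
exists t => //; rewrite (cut1_at_vs v_edge) mem_filter tin andbT.
by apply/asboolP/(emb_onto_desc pf f_onto vin tin); rewrite ftw.
Qed.

Lemma homeo_cut2_at : homeo (cut2_at x v) (cut2_at x' (f v)).
Proof.
apply: (homeo_restriction hf (is_restriction_cut2_at x v) (is_restriction_cut2_at x' (f v))).
  split=> [t | a b | t].
  - rewrite (cut2_at_vs v_edge) (cut2_at_vs fv_edge) !mem_filter => /andP[vt tin].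
    rewrite (emb_mem pf) // andbT; apply: contra vt => /asboolP vt.
    exact/asboolP/(emb_onto_desc pf f_onto vin tin).
  - rewrite (cut2_at_vs v_edge) !mem_filter => /andP[_ ain] /andP[_ bin].
    exact: (emb_inj pf).
  - rewrite (cut2_at_vs v_edge) mem_filter (cut2_at_par v_edge) (cut2_at_par fv_edge).
    by move=> /andP[_ tin] _; rewrite (emb_onto_par pf f_onto).
move=> w; rewrite (cut2_at_vs fv_edge) mem_filter => /andP[vw /f_onto [t tin ftw]].
exists t => //; rewrite (cut2_at_vs v_edge) mem_filter tin andbT.
apply: contra vw => /asboolP vt; apply/asboolP.
by rewrite -ftw; apply/(emb_onto_desc pf f_onto vin tin).
Qed.

End AtEdge.
End CutsUnderHomeomorphism.

Lemma coef_rho_gen_homeo (R : comPzRingType) (phi : rtree_structure) (x x' : phitree phi)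
    (y : phitree phi * phitree phi) :
  homeo x x' ->
  coef (eqv2 (@homeo phi)) (rho_gen R x) y = coef (eqv2 (@homeo phi)) (rho_gen R x') y.
Proof.
move=> [f [pf [f_onto hf]]]; rewrite !coefE !wsum_rho_gen.
rewrite [RHS](perm_big _ (perm_rt_edges_emb_onto pf f_onto)) big_map.
apply: eq_big_seq => v v_edge; apply: (ind_eqv2 R (@homeo_sym phi) (@homeo_trans phi)).
  exact: homeo_cut1_at.
exact: homeo_cut2_at.
Qed.

Section IteratedCuts.
Variables (phi : rtree_structure) (x : phitree phi).
Local Notation T := (tree x).
Local Notation vs := (rt_vs T).
Local Notation r := (rt_root T).

Section Nested.
Variables u v : nat.
Hypotheses (u_edge : u \in rt_edges T) (vin : v \in vs) (uv : desc T u v) (vu : v != u).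

Let uin := rt_edge_mem u_edge.
Let not_vu : ~ desc T v u.
Proof. by move=> vu'; move/eqP: vu; apply; apply: desc_anti uin vu' uv. Qed.
Let v_edge : v \in rt_edges T.
Proof.
have ur : u != r by move: u_edge; rewrite mem_rt_edges => /andP[].
rewrite mem_rt_edges vin andbT; apply: contra ur => /eqP vr.
by move: uv; rewrite vr => /desc_root/eqP.
Qed.
Let v_edge1 := cut1_at_edge u_edge vin uv vu.
Let u_edge2 := cut2_at_edge v_edge u_edge not_vu.

Lemma homeo_cut1_at_cut1_at : homeo (cut1_at (cut1_at x u) v) (cut1_at x v).
Proof.
apply: (homeo_restriction_same (is_restriction_trans (is_restriction_cut1_at _ v)
  (is_restriction_cut1_at x u)) (is_restriction_cut1_at x v)).
- move=> t; rewrite (cut1_at_vs v_edge1) (cut1_at_vs u_edge) (cut1_at_vs v_edge) !mem_filter.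
  have [tin|] := boolP (t \in vs); last by rewrite !andbF.
  rewrite !andbT (asbool_equiv_eq (desc_cut1_at u_edge t uv vu)).
  by apply/andP/idP => [[] //| vt]; split=> //; apply/asboolP/(desc_trans uv)/asboolP.
- by rewrite (cut1_at_root v_edge1) (cut1_at_root v_edge).
- move=> t; rewrite (cut1_at_vs v_edge1) (cut1_at_vs u_edge) !mem_filter.
  rewrite (cut1_at_root v_edge1).
  move=> /and3P[/asboolP vt _ _] tv.
  rewrite (cut1_at_par v_edge1) (cut1_at_par u_edge) (cut1_at_par v_edge) /= (negbTE tv).
  by case: eqP => // tu; case: not_vu; rewrite -tu; apply/(desc_cut1_at u_edge t uv vu).
Qed.

Lemma homeo_cut2_at_cut1_at : homeo (cut2_at (cut1_at x u) v) (cut1_at (cut2_at x v) u).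
Proof.
apply: (homeo_restriction_same
  (is_restriction_trans (is_restriction_cut2_at _ v) (is_restriction_cut1_at x u))
  (is_restriction_trans (is_restriction_cut1_at _ u) (is_restriction_cut2_at x v))).
- move=> t; rewrite (cut2_at_vs v_edge1) (cut1_at_vs u_edge) (cut1_at_vs u_edge2).
  rewrite (cut2_at_vs v_edge) !mem_filter (desc_cut2_at v_edge).
  have [tin|] := boolP (t \in vs); last by rewrite !andbF.
  by rewrite (asbool_equiv_eq (desc_cut1_at u_edge t uv vu)) !andbT andbC.
- by rewrite (cut2_at_root v_edge1) (cut1_at_root u_edge) (cut1_at_root u_edge2).
- move=> t _ _; rewrite (cut2_at_par v_edge1) (cut1_at_par u_edge).
  by rewrite (cut1_at_par u_edge2) (cut2_at_par v_edge).
Qed.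

Lemma homeo_cut2_at_cut2_at_desc : homeo (cut2_at x u) (cut2_at (cut2_at x v) u).
Proof.
apply: (homeo_restriction_same (is_restriction_cut2_at x u)
  (is_restriction_trans (is_restriction_cut2_at _ u) (is_restriction_cut2_at x v))).
- move=> t; rewrite (cut2_at_vs u_edge) (cut2_at_vs u_edge2) (cut2_at_vs v_edge).
  rewrite !mem_filter (desc_cut2_at v_edge).
  have [tin|] := boolP (t \in vs); last by rewrite !andbF.
  case: (asboolP (desc T u t)) => //= ut; rewrite !andbT; apply/esym/negP => /asboolP vt.
  exact/ut/(desc_trans uv).
- by rewrite (cut2_at_root u_edge) (cut2_at_root u_edge2) (cut2_at_root v_edge).
- by move=> t _ _; rewrite (cut2_at_par u_edge) (cut2_at_par u_edge2) (cut2_at_par v_edge).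
Qed.

End Nested.

Section Incomparable.
Variables a b : nat.
Hypotheses (a_edge : a \in rt_edges T) (b_edge : b \in rt_edges T)
  (not_ab : ~ desc T a b) (not_ba : ~ desc T b a).

Let a_edge2 := cut2_at_edge b_edge a_edge not_ba.
Let b_edge2 := cut2_at_edge a_edge b_edge not_ab.

Lemma homeo_cut1_at_cut2_at : homeo (cut1_at x a) (cut1_at (cut2_at x b) a).
Proof.
apply: (homeo_restriction_same (is_restriction_cut1_at x a)
  (is_restriction_trans (is_restriction_cut1_at _ a) (is_restriction_cut2_at x b))).
- move=> t; rewrite (cut1_at_vs a_edge) (cut1_at_vs a_edge2) (cut2_at_vs b_edge).
  rewrite !mem_filter (desc_cut2_at b_edge).
  have [tin|] := boolP (t \in vs); last by rewrite !andbF.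
  case: (asboolP (desc T a t)) => //= at_; rewrite !andbT; apply/esym/negP => /asboolP bt.
  by case: (desc_total at_ bt).
- by rewrite (cut1_at_root a_edge) (cut1_at_root a_edge2).
- by move=> t _ _; rewrite (cut1_at_par a_edge) (cut1_at_par a_edge2) (cut2_at_par b_edge).
Qed.

Lemma homeo_cut2_at_cut2_atC : homeo (cut2_at (cut2_at x a) b) (cut2_at (cut2_at x b) a).
Proof.
apply: (homeo_restriction_same
  (is_restriction_trans (is_restriction_cut2_at _ b) (is_restriction_cut2_at x a))
  (is_restriction_trans (is_restriction_cut2_at _ a) (is_restriction_cut2_at x b))).
- move=> t; rewrite (cut2_at_vs a_edge2) (cut2_at_vs b_edge2).
  rewrite (cut2_at_vs a_edge) (cut2_at_vs b_edge) !mem_filter.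
  rewrite (desc_cut2_at a_edge) (desc_cut2_at b_edge).
  by case: (t \in vs); case: asboolP; case: asboolP.
- rewrite (cut2_at_root a_edge2) (cut2_at_root b_edge2).
  by rewrite (cut2_at_root a_edge) (cut2_at_root b_edge).
- move=> t _ _; rewrite (cut2_at_par a_edge2) (cut2_at_par b_edge2).
  by rewrite (cut2_at_par a_edge) (cut2_at_par b_edge).
Qed.

End Incomparable.
End IteratedCuts.

Section PreLieCount.
Variables (R : comPzRingType) (phi : rtree_structure) (x : phitree phi).
Local Notation T := (projT1 x).
Local Notation vs := (rt_vs T).
Local Notation r := (rt_root T).
Local Notation hom := (@homeo phi).
Local Notation rho := (@rho_gen R phi).
Local Open Scope ring_scope.

Definition nested_pair u v := [&& u != r, `[< desc T u v >] & v != u].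
Definition split_pair a b := [&& a != r, ~~ `[< desc T a b >] & b != r].
Definition incomparable_pair a b :=
  [&& a != r, b != r, ~~ `[< desc T a b >] & ~~ `[< desc T b a >]].

Definition nested_term w u v := ind R (eqv3 hom
  (cut1_at (cut1_at x u) v, cut2_at (cut1_at x u) v, cut2_at x u) w).
Definition split_term w a b := ind R (eqv3 hom
  (cut1_at x a, cut1_at (cut2_at x a) b, cut2_at (cut2_at x a) b) w).

Lemma coef_ext_l_rho w : coef (eqv3 hom) (ext_l rho (rho x)) w =
  \sum_(u <- vs) \sum_(v <- vs | nested_pair u v) nested_term w u v.
Proof.
rewrite coefE wsum_ext_l wsum_rho_gen big_filter big_mkcond.
apply: eq_big_seq => u uin; case: ifP => ur; last first.
  by rewrite big_pred0 // => v; rewrite /nested_pair ur.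
have u_edge : u \in rt_edges T by rewrite mem_rt_edges ur uin.
rewrite wsum_rho_gen /rt_edges (cut1_at_vs u_edge) (cut1_at_root u_edge).
rewrite -filter_predI big_filter; apply: eq_bigl => v.
by rewrite /nested_pair ur /= andbC.
Qed.

Lemma coef_ext_r_rho w : coef (eqv3 hom) (ext_r rho (rho x)) w =
  \sum_(a <- vs) \sum_(b <- vs | split_pair a b) split_term w a b.
Proof.
rewrite coefE wsum_ext_r wsum_rho_gen big_filter big_mkcond.
apply: eq_big_seq => a ain; case: ifP => ar; last first.
  by rewrite big_pred0 // => b; rewrite /split_pair ar.
have a_edge : a \in rt_edges T by rewrite mem_rt_edges ar ain.
rewrite wsum_rho_gen /rt_edges (cut2_at_vs a_edge) (cut2_at_root a_edge).
rewrite -filter_predI big_filter; apply: eq_bigl => b.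
by rewrite /split_pair ar /= andbC.
Qed.

Lemma split_pair_desc a b : b \in vs ->
  split_pair a b && `[< desc T b a >] = nested_pair b a.
Proof.
move=> bin; rewrite /split_pair /nested_pair.
case: (asboolP (desc T b a)) => [ba | _]; last by rewrite !andbF.
rewrite andbT; apply/and3P/and3P => [[_ not_ab br] | [br _ ab]].
  by split=> //; apply: contra not_ab => /eqP ->; apply/asboolP/desc_refl.
split=> //; first by apply: contra br => /eqP ar; move: ba; rewrite ar => /desc_root ->.
by apply: contra ab => /asboolP ab; rewrite (desc_anti bin ab ba).
Qed.

Lemma split_pair_not_desc a b :
  split_pair a b && ~~ `[< desc T b a >] = incomparable_pair a b.
Proof.
rewrite /split_pair /incomparable_pair; case: (a != r) => //=.
by case: (b != r); rewrite /= ?andbT ?andbF // andbC.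
Qed.

Lemma incomparable_pairC a b : incomparable_pair a b = incomparable_pair b a.
Proof.
by rewrite /incomparable_pair; case: (a != r); case: (b != r); case: asboolP; case: asboolP.
Qed.

Lemma split_term_nested w a b : a \in vs -> b \in vs -> nested_pair b a ->
  split_term w a b = nested_term w b a.
Proof.
move=> ain bin /and3P[br /asboolP ba ab].
have b_edge : b \in rt_edges T by rewrite mem_rt_edges br bin.
apply/esym/(ind_eqv3 R (@homeo_sym phi) (@homeo_trans phi)).
- exact: homeo_cut1_at_cut1_at.
- exact: homeo_cut2_at_cut1_at.
- exact: homeo_cut2_at_cut2_at_desc.
Qed.

Lemma split_term_incomparable w a b : a \in vs -> b \in vs -> incomparable_pair a b ->
  split_term (flip3 w) b a = split_term w a b.
Proof.
move=> ain bin /and4P[ar br /asboolP not_ab /asboolP not_ba].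
have a_edge : a \in rt_edges T by rewrite mem_rt_edges ar ain.
have b_edge : b \in rt_edges T by rewrite mem_rt_edges br bin.
rewrite /split_term ind_eqv3_flip3 /flip3 /=.
apply: (ind_eqv3 R (@homeo_sym phi) (@homeo_trans phi)).
- exact/homeo_sym/homeo_cut1_at_cut2_at.
- exact: homeo_cut1_at_cut2_at.
- exact: homeo_cut2_at_cut2_atC.
Qed.

Definition incomparable_sum w :=
  \sum_(a <- vs) \sum_(b <- vs | incomparable_pair a b) split_term w a b.

Lemma incomparable_sum_flip3 w : incomparable_sum (flip3 w) = incomparable_sum w.
Proof.
rewrite /incomparable_sum (exchange_big_dep predT) //=.
apply: eq_big_seq => a ain; rewrite big_seq_cond [RHS]big_seq_cond.
apply: eq_big => [b | b /andP[bin ab]]; first by rewrite incomparable_pairC.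
by rewrite split_term_incomparable // incomparable_pairC.
Qed.

Lemma coef_assoc_defect_rho w :
  coef (eqv3 hom) (assoc_defect rho x) w = - incomparable_sum w.
Proof.
rewrite /assoc_defect coef_fsub coef_ext_l_rho coef_ext_r_rho.
have -> : \sum_(a <- vs) \sum_(b <- vs | split_pair a b) split_term w a b =
    \sum_(a <- vs) \sum_(b <- vs | nested_pair b a) nested_term w b a + incomparable_sum w.
  rewrite /incomparable_sum -big_split; apply: eq_big_seq => a ain.
  rewrite (bigID (fun b => `[< desc T b a >])) /=; congr (_ + _); last first.
    by apply: eq_bigl => b; rewrite split_pair_not_desc.
  rewrite big_seq_cond [RHS]big_seq_cond; apply: eq_big => [b | b /andP[bin]].
    by case: (boolP (b \in vs)) => // bin; rewrite split_pair_desc.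
  by rewrite split_pair_desc // => /(split_term_nested w ain bin).
rewrite [X in _ - (X + _)](exchange_big_dep predT) //=.
by rewrite opprD addrA subrr add0r.
Qed.

End PreLieCount.

Theorem lemma4p2 (R : comPzRingType) (phi : rtree_structure) :
  well_defined_comult (@homeo phi) (@rho_gen R phi) /\
  preLie_comult (@homeo phi) (@rho_gen R phi).
Proof.
split.
- apply: well_defined_comult_inv.
  + exact: homeo_refl.
  + exact: homeo_sym.
  + exact: homeo_trans.
  + exact: coef_rho_gen_homeo.
- apply: preLie_comult_flip3 => x w.
  by rewrite !coef_assoc_defect_rho incomparable_sum_flip3.
Qed.
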